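(* Let $G$, $k\ge 3$, the choice strings $c_{i,j}$, the template string $t$, $L$ and $d$ be as in the binary construction in the context, and let $s\in\{0,1\}^L$ be a solution, i.e. $t$ and every choice string $c_{i,j}$ ($1\le i<j\le k$) have a substring of length $L$ (a match) at Hamming distance at most $d$ from $s$. Then $s$ and all its matches in $t$ and in the choice strings start with $\mathrm{front\_tag}$.
   Context: Let $G=(V,E)$ be an undirected simple graph with $V=\{v_1,\dots,v_n\}$ and edge set $E=\{e_1,\dots,e_m\}$, and let $k\ge 3$ be an integer; put $N=\binom{k}{2}$ and $b=nk-2k+2$. All strings are over $\{0,1\}$. For $1\le p\le n$ let $\mathrm{number}(p)=0^{p-1}10^{n-p}$. Let $\mathrm{front\_tag}=(1^{3nk}0)^{nk}$ (length $(3nk+1)nk$). Order the pairs $(i,j)$, $1\le i<j\le k$, lexicographically and let $i'$ be the position of $(i,j)$ in this order. For an edge $e$ joining $v_r,v_s$ with $r<s$ let $\mathrm{encode}(i,j,e)=(0^n)^{i-1}\,\mathrm{number}(r)\,(0^n)^{j-i-1}\,\mathrm{number}(s)\,(0^n)^{k-j}$, $\mathrm{back\_tag}(i')=0^{(i'-1)b}1^{b}0^{(N-i')b}$, and $\mathrm{block}(i,j,e)=\mathrm{front\_tag}\,\mathrm{encode}(i,j,e)\,\mathrm{back\_tag}(i')$. The choice string is $c_{i,j}=\mathrm{block}(i,j,e_1)\cdots\mathrm{block}(i,j,e_m)$. The template string is $t=\mathrm{front\_tag}\,1^{nk}\,0^{Nb}$. Set $L=(3nk+1)nk+nk+Nb$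 and $d=nk-k$. *)

From mathcomp Require Import all_boot.
Set Implicit Arguments. Unset Strict Implicit. Unset Printing Implicit Defensive.

Section Construction.
Variables (n k : nat) (E : seq (nat * nat)).

Definition NN : nat := 'C(k, 2).
Definition bb : nat := n * k - 2 * k + 2.

Definition zeros_n : seq bool := nseq n false.

Definition number (p : nat) : seq bool :=
  nseq (p - 1) false ++ true :: nseq (n - p) false.

Definition front_tag : seq bool :=
  flatten (nseq (n * k) (rcons (nseq (3 * n * k) true) false)).

Definition pairs_lex : seq (nat * nat) :=
  [seq (i, j) | i <- iota 1 k, j <- iota i.+1 (k - i)].

Definition pair_pos (i j : nat) : nat := (index (i, j) pairs_lex).+1.

(* encode(i,j,e) for e = {v_r, v_s}, r < s *)
Definition encode (i j : nat) (e : nat * nat) : seq bool :=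
  flatten (nseq (i - 1) zeros_n) ++ number e.1 ++
  flatten (nseq (j - i - 1) zeros_n) ++ number e.2 ++
  flatten (nseq (k - j) zeros_n).

Definition back_tag (ip : nat) : seq bool :=
  nseq ((ip - 1) * bb) false ++ nseq bb true ++ nseq ((NN - ip) * bb) false.

Definition block (i j : nat) (e : nat * nat) : seq bool :=
  front_tag ++ encode i j e ++ back_tag (pair_pos i j).

Definition choice_string (i j : nat) : seq bool :=
  flatten [seq block i j e | e <- E].

Definition template : seq bool :=
  front_tag ++ nseq (n * k) true ++ nseq (NN * bb) false.

Definition LL : nat := (3 * n * k + 1) * (n * k) + n * k + NN * bb.
Definition dd : nat := n * k - k.

End Construction.

Definition hamming (u v : seq bool) : nat :=
  count (fun p : bool * bool => p.1 != p.2) (zip u v).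

Definition substr (w : seq bool) (p l : nat) : seq bool := take l (drop p w).

Definition is_match_at (w s : seq bool) (d p : nat) : Prop :=
  p + size s <= size w /\ hamming s (substr w p (size s)) <= d.

Definition simple_graph_edges (n : nat) (E : seq (nat * nat)) : Prop :=
  uniq E /\ forall e, e \in E -> 1 <= e.1 /\ e.1 < e.2 /\ e.2 <= n.

Definition is_solution (n k : nat) (E : seq (nat * nat)) (s : seq bool) : Prop :=
  size s = LL n k /\
  (exists p, is_match_at (template n k) s (dd n k) p) /\
  (forall i j, 1 <= i -> i < j -> j <= k ->
     exists p, is_match_at (choice_string n k E i j) s (dd n k) p).

From mathcomp Require Import all_boot zify.
Set Implicit Arguments. Unset Strict Implicit. Unset Printing Implicit Defensive.

(* The template t and every block B of a choice string agree on front_tag and differ in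
   exactly 2d = 2(nk - k) places: nk - 2 against the encoding and b against the back tag.
   A string s within distance d of both therefore makes the triangle inequality tight, so
   s agrees with t wherever t and B agree, in particular on front_tag.

   The real work is to show that every match in a choice string is block-aligned. The
   front tag is 1 except at one residue modulo its period P = 3nk + 1. If a window is not
   aligned, its first |front_tag| positions contain either a copy of the front tag shifted
   by a non-multiple of P, which costs two mismatches per period against t, or a stretch
   of length at least 3nk (or a whole tail) lying inside a tail, which has only b + 2 ones.
   Either way the window is more than 2d away from t, although it is within d of s and s
   is within d of t. *)

Lemma count_iota_sub (P : pred nat) a l a' l' :
  a <= a' -> a' + l' <= a + l -> count P (iota a' l') <= count P (iota a l).
Proof.
move=> le_a le_end.
have -> : l = (a' - a) + (l' + (a + l - (a' + l'))) by lia.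
rewrite !iotaD !count_cat subnKC //; lia.
Qed.

Lemma count_iota_shift (P : pred nat) d a l :
  count (fun j => P (d + j)) (iota a l) = count P (iota (d + a) l).
Proof. by rewrite iotaDl count_map. Qed.

Lemma count_nth_drop (w : seq bool) a :
  count (fun o => nth false w (a + o)) (iota 0 (size w - a)) = count id (drop a w).
Proof.
rewrite -[in RHS](mkseq_nth false (drop a w)) size_drop /mkseq count_map.
by apply: eq_count => o /=; rewrite nth_drop.
Qed.

Lemma prefix_nth (T : eqType) (x0 : T) (u w : seq T) :
  size u <= size w -> (forall j, j < size u -> nth x0 w j = nth x0 u j) -> prefix u w.
Proof.
move=> le_uw eq_uw; rewrite prefixE; apply/eqP/(@eq_from_nth _ x0); first by rewrite size_takel.
by move=> j; rewrite size_takel // => lt_j; rewrite nth_take // eq_uw.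
Qed.

Section FlattenUniform.
Variables (T : eqType) (x0 : T) (l : nat) (ss : seq (seq T)).
Hypothesis size_ss : forall u, u \in ss -> size u = l.

Lemma size_flatten_uniform : size (flatten ss) = size ss * l.
Proof.
rewrite size_flatten.
have /all_pred1P -> : all (pred1 l) (shape ss).
  by apply/allP => _ /mapP[u u_in ->]; rewrite /= size_ss.
by rewrite sumn_nseq size_map mulnC.
Qed.

Lemma nth_flatten_uniform q o : q < size ss -> o < l ->
  nth x0 (flatten ss) (q * l + o) = nth x0 (nth [::] ss q) o.
Proof.
elim: ss size_ss q => [//|u ss' IH] size_us q lt_q lt_o.
have size_u : size u = l by apply: size_us; rewrite mem_head.
rewrite /= nth_cat size_u; case: q lt_q => [|q] lt_q /=; first by rewrite mul0n add0n lt_o.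
rewrite mulSn -addnA ltnNge leq_addr /= addKn IH //.
by move=> v v_in; apply: size_us; rewrite in_cons v_in orbT.
Qed.

End FlattenUniform.

Lemma leq_divS_subn y c : y %/ c.+1 <= y - c.
Proof.
have [lt_y|le_y] := ltnP y c.+1; first by rewrite divn_small.
have := leq_divM y c.+1; have : 0 < y %/ c.+1 by rewrite divn_gt0.
nia.
Qed.

Definition mismatch (f g : nat -> bool) (a l : nat) : nat :=
  count (fun j => f j != g j) (iota a l).

Lemma mismatch_sub f g a l a' l' :
  a <= a' -> a' + l' <= a + l -> mismatch f g a' l' <= mismatch f g a l.
Proof. exact: count_iota_sub. Qed.

Lemma mismatch_triangleI f g h a l :
  mismatch g h a l + count (fun j => (f j != g j) && (f j != h j)) (iota a l)
    <= mismatch f g a l + mismatch f h a l.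
Proof.
rewrite /mismatch -[X in _ <= X]count_predUI leq_add2r; apply: sub_count => j /=.
by case: (f j); case: (g j); case: (h j).
Qed.

Lemma mismatch_triangle f g h a l :
  mismatch g h a l <= mismatch f g a l + mismatch f h a l.
Proof. exact: leq_trans (leq_addr _ _) (mismatch_triangleI f g h a l). Qed.

Lemma hamming_mismatch (u v : seq bool) : size u = size v ->
  hamming u v = mismatch (nth false u) (nth false v) 0 (size u).
Proof.
elim: u v => [|x u IHu] [|y v] //= [/IHu eq_uv].
rewrite /hamming /= -/(hamming u v) eq_uv /mismatch /=.
by rewrite -(addn0 1) iotaDl count_map.
Qed.

Lemma hamming_cat (u1 u2 v1 v2 : seq bool) : size u1 = size v1 ->
  hamming (u1 ++ u2) (v1 ++ v2) = hamming u1 v1 + hamming u2 v2.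
Proof. by move=> eq_size; rewrite /hamming zip_cat // count_cat. Qed.

Lemma hamming_refl (u : seq bool) : hamming u u = 0.
Proof. by elim: u => [|x u IHu] //; rewrite /hamming /= eqxx. Qed.

Lemma hamming_nseq x (w : seq bool) :
  hamming (nseq (size w) x) w = count (fun y => x != y) w.
Proof. by elim: w => [|y w IHw] //; rewrite /hamming /= -/(hamming _ _) IHw. Qed.

Lemma hamming_tight (u v w : seq bool) j :
  size u = size v -> size u = size w -> hamming u v + hamming u w <= hamming v w ->
  j < size u -> nth false v j = nth false w j -> nth false u j = nth false v j.
Proof.
move=> size_v size_w tight lt_j eq_vw.
have size_vw : size v = size w by rewrite -size_v.
rewrite (hamming_mismatch size_v) (hamming_mismatch size_w) (hamming_mismatch size_vw) in tight.
rewrite -size_v in tight.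
have /eqP : count (fun x => (nth false u x != nth false v x) && (nth false u x != nth false w x))
    (iota 0 (size u)) = 0.
  by have := mismatch_triangleI (nth false u) (nth false v) (nth false w) 0 (size u); lia.
rewrite eqn0Ngt -has_count => /hasPn/(_ j).
by rewrite mem_iota lt_j -eq_vw andbb => /(_ isT)/negPn/eqP.
Qed.

Lemma match_mismatch (w s : seq bool) d p : is_match_at w s d p ->
  mismatch (nth false s) (fun j => nth false w (p + j)) 0 (size s) <= d.
Proof.
case=> fit; rewrite hamming_mismatch; last first.
  by rewrite size_takel // size_drop; lia.
apply: leq_trans; apply: eq_leq; apply: eq_in_count => j.
by rewrite mem_iota => /andP[_ lt_j]; rewrite /substr nth_take // nth_drop.
Qed.

Section PeriodicPattern.
Variables (P c : nat).
Hypothesis lt_cP : c < P.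

Lemma count_mod_period a : count (fun j => j %% P == c) (iota a P) = 1.
Proof.
elim: a => [|a IHa].
  rewrite (@eq_in_count _ _ (pred1 c)) ?count_uniq_mem ?iota_uniq ?mem_iota ?lt_cP //.
  by move=> j; rewrite mem_iota add0n => /andP[_ lt_jP]; rewrite modn_small.
rewrite -IHa; case: P lt_cP {IHa} => [//|P'] _.
have -> : iota a.+1 P'.+1 = iota a.+1 P' ++ [:: a.+1 + P'] by rewrite -[P'.+1]addn1 iotaD.
by rewrite count_cat /= addn0 addnC addSnnS modnDr.
Qed.
Lemma count_mod_mul a q : count (fun j => j %% P == c) (iota a (q * P)) = q.
Proof.
elim: q a => [|q IHq] a; first by rewrite mul0n.
by rewrite mulSn iotaD count_cat count_mod_period IHq.
Qed.

Lemma count_mod_iota a l :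
  l %/ P <= count (fun j => j %% P == c) (iota a l) <= (l %/ P).+1.
Proof.
have lt_rP : l %% P < P by rewrite ltn_pmod // (leq_ltn_trans _ lt_cP).
rewrite [in iota a l](divn_eq l P) iotaD count_cat count_mod_mul leq_addr /=.
rewrite -addn1 leq_add2l -(count_mod_period (a + l %/ P * P)).
by apply: count_iota_sub; rewrite // leq_add2l ltnW.
Qed.

Lemma mismatch_shift d a l : d %% P != 0 ->
  2 * (l %/ P) <= mismatch (fun j => j %% P != c) (fun j => (d + j) %% P != c) a l.
Proof.
move=> d_ndiv.
have disj j : j %% P == c -> (d + j) %% P == c -> false.
  move=> /eqP jc /eqP jdc; have : d + j == 0 + j %[mod P] by rewrite add0n jdc jc.
  by rewrite eqn_modDr mod0n (negbTE d_ndiv).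
have /andP[le_qA _] := count_mod_iota a l.
have /andP[le_qB _] := count_mod_iota (d + a) l.
rewrite -count_iota_shift in le_qB.
rewrite mul2n -addnn; apply: leq_trans (leq_add le_qA le_qB) _.
rewrite -count_predUI (@eq_count _ (predI _ _) pred0) ?count_pred0 ?addn0; last first.
  by move=> j /=; apply/negbTE/negP => /andP[A /(disj _ A)].
apply: sub_count => j /=.
by move: (disj j); case: (j %% P == c); case: ((d + j) %% P == c) => // /(_ isT isT).
Qed.

Lemma mismatch_sparse (g : nat -> bool) a l w : count g (iota a l) <= w ->
  l - w - (l %/ P).+1 <= mismatch (fun j => j %% P != c) g a l.
Proof.
move=> le_gw; have /andP[_ le_zeros] := count_mod_iota a l.
have le_ng : count (predC g) (iota a l) <=
    mismatch (fun j => j %% P != c) g a l + count (fun j => j %% P == c) (iota a l).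
  rewrite -count_predUI; apply: leq_trans (leq_addr _ _); apply: sub_count => j /=.
  by case: (g j); case: (j %% P == c).
have := count_predC g (iota a l); rewrite size_iota; lia.
Qed.

End PeriodicPattern.

(* An abstract choice string [cf] made of [m] blocks, with [K] for [n * k] and [N] for
   [binom(k, 2)]. *)
Section Misalignment.
Variables (K k N m : nat) (cf : nat -> bool).
Hypotheses (k_ge3 : 3 <= k) (K_ge : 2 * k <= K) (N_ge3 : 3 <= N).

Let P := (3 * K).+1.
Let F := K * P.
Local Notation b := (K - 2 * k + 2).
Let M := K + N * b.
Let L := F + M.
Local Notation tag := (fun j => j %% P != 3 * K).

Hypothesis cf_front : forall q o, q < m -> o < F -> cf (q * L + o) = tag o.
Hypothesis cf_tail : forall q, q < m -> count cf (iota (q * L + F) M) <= b + 2.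

Let window p j := cf (p + j).

Let P_gt : 3 * K < P. Proof. by []. Qed.
Let F_eq : F = K.-1 * P + P.
Proof. by rewrite /F -mulSnr prednK //; lia. Qed.
Let M_ge : K + 3 * b <= M.
Proof. by rewrite leq_add2l leq_mul2r N_ge3 orbT. Qed.

Lemma tail_excess y : 3 * K <= y \/ y = M -> 2 * (K - k) < y - (b + 2) - (y %/ P).+1.
Proof. have := leq_divS_subn y (3 * K); have := M_ge; rewrite -/P; lia. Qed.

Lemma mismatch_tail_window p a y q tau :
  q < m -> a + y <= F -> tau + y <= M -> p + a = q * L + F + tau ->
  3 * K <= y \/ y = M -> 2 * (K - k) < mismatch tag (window p) 0 F.
Proof.
move=> lt_qm le_aF le_tauM eq_pa /tail_excess y_excess.
have sparse : count (window p) (iota a y) <= b + 2.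
  rewrite count_iota_shift eq_pa; apply: leq_trans (cf_tail lt_qm).
  by apply: count_iota_sub; lia.
apply: leq_trans y_excess _; apply: leq_trans (mismatch_sparse P_gt sparse) _.
exact: mismatch_sub.
Qed.

Lemma mismatch_shifted_window p a l d :
  a + l <= F -> d %% P != 0 -> K.-1 * P <= l ->
  (forall j, a <= j < a + l -> cf (p + j) = tag (d + j)) ->
  2 * (K - k) < mismatch tag (window p) 0 F.
Proof.
move=> le_alF d_ndiv le_l eq_window.
have := mismatch_shift P_gt a l d_ndiv.
have -> : mismatch tag (fun j => tag (d + j)) a l = mismatch tag (window p) a l.
  by apply: eq_in_count => j; rewrite mem_iota /window => /eq_window ->.
have := mismatch_sub tag (window p) (leq0n a) (le_alF : a + l <= 0 + F).
rewrite -leq_divRL // in le_l; lia.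
Qed.

Let L_gt0 : 0 < L. Proof. by rewrite /L F_eq; lia. Qed.

Lemma next_block_exists p : p + L <= m * L -> 0 < p %% L -> (p %/ L).+1 < m.
Proof. by move=> fit r_gt0; rewrite -(ltn_pmul2r L_gt0) mulSn; have := divn_eq p L; lia. Qed.

Lemma misaligned_in_front p : p + L <= m * L -> 0 < p %% L < F ->
  2 * (K - k) < mismatch tag (window p) 0 F.
Proof.
move=> fit /andP[r_gt0 r_ltF]; have lt_qm := next_block_exists fit r_gt0.
have ep := divn_eq p L; set q := p %/ L in lt_qm ep; set r := p %% L in r_gt0 r_ltF ep.
have [r_small|r_big] := ltnP r (3 * K).
  apply: (@mismatch_shifted_window p 0 (F - r) r); rewrite ?modn_small ?F_eq; try lia.
  by move=> j /andP[_ lt_j]; rewrite ep -addnA cf_front //; lia.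
by apply: (@mismatch_tail_window p (F - r) (minn r M) q 0); lia.
Qed.

Lemma misaligned_in_tail p : p + L <= m * L -> F <= p %% L ->
  2 * (K - k) < mismatch tag (window p) 0 F.
Proof.
move=> fit r_geF; have le_PF : P <= F by rewrite F_eq leq_addl.
have F_gt0 : 0 < F := leq_trans (ltn0Sn _) le_PF.
have lt_qm := next_block_exists fit (leq_trans F_gt0 r_geF).
have ep := divn_eq p L; have r_ltL : p %% L < L by rewrite ltn_mod.
set q := p %/ L in lt_qm ep; set r := p %% L in r_geF r_ltL ep.
have [y_big|y_small] := leqP (3 * K) (L - r).
  by apply: (@mismatch_tail_window p 0 (minn (L - r) F) q (r - F)); rewrite ?F_eq; lia.
(* the front tag of block [q.+1] starts at window offset [L - r] *)
apply: (@mismatch_shifted_window p (L - r) (F - (L - r)) (P - (L - r)));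
  rewrite ?modn_small ?F_eq; try lia.
move=> j /andP[le_j lt_j]; have -> : p + j = q.+1 * L + (j - (L - r)) by rewrite mulSn; lia.
rewrite cf_front //; last by rewrite F_eq; lia.
by rewrite -(modnDr (j - (L - r)) P); congr (_ %% _ != _); lia.
Qed.

Lemma misaligned_window p : p + L <= m * L -> p %% L != 0 ->
  2 * (K - k) < mismatch tag (window p) 0 F.
Proof.
move=> fit r_neq0; have [r_ltF|r_geF] := ltnP (p %% L) F.
  by apply: misaligned_in_front; rewrite // lt0n r_neq0.
exact: misaligned_in_tail.
Qed.

End Misalignment.

Lemma LL_split n k :
  LL n k = n * k * (3 * (n * k)).+1 + (n * k + NN k * bb n k).
Proof. rewrite /LL; lia. Qed.

Lemma LL_gt0 n k : 2 < k -> 0 < LL n k.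
Proof.
move=> k_ge3; have NN_gt0 : 0 < NN k := leq_trans (isT : 0 < 'C(3, 2)) (leq_bin2l 2 k_ge3).
have : 0 < NN k * bb n k by rewrite muln_gt0 NN_gt0 /bb addn2.
by rewrite LL_split; lia.
Qed.

Section Construction.
Variables (n k : nat).
Local Notation K := (n * k).
Local Notation P := (3 * K).+1.

Let period_mem u : u \in nseq K (rcons (nseq (3 * n * k) true) false) -> size u = P.
Proof. by move/nseqP=> [-> _]; rewrite size_rcons size_nseq mulnA. Qed.

Lemma size_front_tag : size (front_tag n k) = K * P.
Proof. by rewrite (size_flatten_uniform period_mem) size_nseq. Qed.

Lemma nth_front_tag j : j < K * P -> nth false (front_tag n k) j = (j %% P != 3 * K).
Proof.
move=> lt_j; rewrite /front_tag {1}(divn_eq j P) (nth_flatten_uniform _ period_mem); last first.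
- by rewrite ltn_pmod.
- by rewrite size_nseq ltn_divLR.
rewrite nth_nseq ltn_divLR // lt_j nth_rcons nth_nseq size_nseq -mulnA.
by have := ltn_pmod j (ltn0Sn (3 * K)); rewrite ltnS; case: ltngtP.
Qed.

Lemma flatten_zeros m : flatten (nseq m (zeros_n n)) = nseq (m * n) false.
Proof. by elim: m => [|m IHm] //=; rewrite IHm mulSn nseqD. Qed.

Lemma size_encode i j e : 0 < i < j -> j <= k -> 0 < e.1 <= n -> 0 < e.2 <= n ->
  size (encode n k i j e) = K.
Proof.
move=> ij jk e1 e2; rewrite /encode /number !size_cat !flatten_zeros /= !size_nseq.
nia.
Qed.

Lemma count_encode i j e : count id (encode n k i j e) = 2.
Proof. by rewrite /encode /number !count_cat !flatten_zeros /= !count_nseq /= !mul0n. Qed.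

Lemma size_pairs_lex : size (pairs_lex k) = NN k.
Proof.
rewrite /pairs_lex size_allpairs_dep /NN -bin2_sum sumnE big_map.
have -> : iota 1 k = index_iota 1 k.+1 by rewrite /index_iota subn1.
rewrite big_add1 big_nat_rev /=.
by apply: eq_big_nat => i /andP[_ lt_ik]; rewrite size_iota; lia.
Qed.

Lemma pair_pos_le i j : 0 < i < j -> j <= k -> pair_pos k i j <= NN k.
Proof.
move=> ij jk; rewrite /pair_pos -size_pairs_lex index_mem.
by apply: allpairs_f_dep; rewrite mem_iota; lia.
Qed.

Lemma size_back_tag ip : 0 < ip <= NN k -> size (back_tag n k ip) = NN k * bb n k.
Proof. by move=> ip_range; rewrite /back_tag !size_cat !size_nseq; nia. Qed.

Lemma count_back_tag ip : count id (back_tag n k ip) = bb n k.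
Proof. by rewrite /back_tag !count_cat !count_nseq /=; lia. Qed.

Lemma size_template : size (template n k) = LL n k.
Proof. by rewrite /template !size_cat size_front_tag !size_nseq LL_split. Qed.

Lemma nth_template_front j : j < K * P -> nth false (template n k) j = (j %% P != 3 * K).
Proof. by move=> lt_j; rewrite /template nth_cat size_front_tag lt_j nth_front_tag. Qed.

Lemma template_match_window s d p : size s = LL n k ->
  is_match_at (template n k) s d p -> substr (template n k) p (size s) = template n k.
Proof.
rewrite /is_match_at size_template => size_s [fit _]; have -> : p = 0 by lia.
by rewrite /substr drop0 take_oversize // size_template size_s.
Qed.

End Construction.

Section ChoiceString.
Variables (n k : nat) (E : seq (nat * nat)) (i j : nat).
Hypothesis E_edges : forall e, e \in E -> 1 <= e.1 /\ e.1 < e.2 /\ e.2 <= n.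
Hypotheses (i_gt0 : 0 < i) (lt_ij : i < j) (j_le : j <= k).
Local Notation K := (n * k).
Local Notation F := (K * (3 * K).+1).
Local Notation c := (choice_string n k E i j).

Lemma size_block e : e \in E -> size (block n k i j e) = LL n k.
Proof.
case: e => r s /E_edges /= e_range; rewrite /block (size_cat (front_tag n k)) size_front_tag.
rewrite (size_cat (encode _ _ _ _ _)) size_encode ?size_back_tag ?pair_pos_le ?LL_split //=;
  lia.
Qed.

Let size_blocks u : u \in [seq block n k i j e | e <- E] -> size u = LL n k.
Proof. by case/mapP=> e e_in ->; apply: size_block. Qed.

Lemma size_choice_string : size c = size E * LL n k.
Proof. by rewrite (size_flatten_uniform size_blocks) size_map. Qed.

Lemma nth_choice_string q o : q < size E -> o < LL n k ->
  nth false c (q * LL n k + o) = nth false (block n k i j (nth (0, 0) E q)) o.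
Proof.
by move=> lt_q lt_o; rewrite (nth_flatten_uniform _ size_blocks) ?size_map // (nth_map (0, 0)).
Qed.

Lemma nth_choice_string_front q o : q < size E -> o < F ->
  nth false c (q * LL n k + o) = (o %% (3 * K).+1 != 3 * K).
Proof.
move=> lt_q lt_o; rewrite nth_choice_string //; last by rewrite LL_split ltn_addr.
by rewrite /block nth_cat size_front_tag lt_o nth_front_tag.
Qed.

Lemma count_choice_string_tail q : q < size E ->
  count (nth false c) (iota (q * LL n k + F) (K + NN k * bb n k)) = bb n k + 2.
Proof.
move=> lt_q; have e_in : nth (0, 0) E q \in E by rewrite mem_nth.
set blk := block n k i j (nth (0, 0) E q).
have size_blk : size blk = F + (K + NN k * bb n k) by rewrite size_block // LL_split.
rewrite -count_iota_shift (@eq_in_count _ _ (nth false blk)); last first.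
  by move=> o; rewrite mem_iota => /andP[_ lt_o]; rewrite nth_choice_string // LL_split.
rewrite -[in iota F _](addn0 F) -count_iota_shift.
have -> : K + NN k * bb n k = size blk - F by rewrite size_blk addKn.
rewrite count_nth_drop /blk /block drop_size_cat ?size_front_tag // count_cat.
by rewrite count_encode count_back_tag addnC.
Qed.

Lemma choice_match_aligned s p : 1 < n -> 2 < k -> size s = LL n k ->
  hamming s (template n k) <= dd n k -> is_match_at c s (dd n k) p -> p %% LL n k = 0.
Proof.
move=> n_gt1 k_ge3 size_s s_t c_match; apply/eqP; apply: contraT => misaligned.
have fit : p + LL n k <= size E * LL n k by rewrite -size_choice_string -size_s; case: c_match.
have t_window : mismatch (nth false (template n k)) (fun o => nth false c (p + o)) 0 (LL n k)
    <= 2 * dd n k.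
  rewrite mul2n -addnn; apply: leq_trans (mismatch_triangle (nth false s) _ _ _ _) _.
  have s_window := match_mismatch c_match.
  rewrite -size_s -hamming_mismatch ?size_template //.
  exact: leq_add s_t s_window.
rewrite LL_split in fit misaligned t_window.
have tag_window :
    mismatch (fun o => o %% (3 * K).+1 != 3 * K) (fun o => nth false c (p + o)) 0 F
      <= 2 * dd n k.
  apply: leq_trans t_window; apply: leq_trans (mismatch_sub _ _ (leqnn 0) (leq_addr _ F)).
  apply: eq_leq; apply: eq_in_count => o; rewrite mem_iota => /andP[_ lt_o].
  by rewrite nth_template_front.
have K_ge : 2 * k <= K by rewrite leq_mul2r n_gt1 orbT.
have N_ge3 : 2 < NN k by apply: (leq_bin2l 2 k_ge3).
suff: 2 * dd n k < mismatch (fun o => o %% (3 * K).+1 != 3 * K) (fun o => nth false c (p + o)) 0 F.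
  by rewrite ltnNge tag_window.
apply: (misaligned_window k_ge3 K_ge N_ge3 _ _ fit misaligned).
- by move=> q o lt_q lt_o; rewrite -LL_split nth_choice_string_front.
- by move=> q lt_q; rewrite -LL_split count_choice_string_tail.
Qed.

Lemma aligned_match_block s p : 0 < LL n k -> size s = LL n k ->
  is_match_at c s (dd n k) p -> p %% LL n k = 0 ->
  exists2 e, e \in E & substr c p (size s) = block n k i j e.
Proof.
move=> L_gt0 size_s [fit _] aligned; rewrite size_s size_choice_string in fit.
have ep : p = p %/ LL n k * LL n k by rewrite {1}(divn_eq p (LL n k)) aligned addn0.
have lt_q : p %/ LL n k < size E by rewrite -(ltn_pmul2r L_gt0) -ep; lia.
have e_in := mem_nth (0, 0) lt_q; exists (nth (0, 0) E (p %/ LL n k)) => //.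
have size_window : size (substr c p (size s)) = size s.
  by rewrite size_takel // size_drop size_choice_string; lia.
apply: (@eq_from_nth _ false); first by rewrite size_window size_block.
move=> o; rewrite size_window => lt_o.
by rewrite nth_take // nth_drop {1}ep nth_choice_string // -size_s.
Qed.

Lemma hamming_template_block e : e \in E ->
  2 * dd n k <= hamming (template n k) (block n k i j e).
Proof.
case: e => r s /E_edges /= e_range.
set enc := encode n k i j (r, s); set back := back_tag n k (pair_pos k i j).
have size_enc : size enc = K by apply: size_encode => /=; lia.
have size_back : size back = NN k * bb n k.
  by rewrite size_back_tag // pair_pos_le // i_gt0 lt_ij.
have K_ge : 2 * k <= K by rewrite leq_mul2r (_ : 2 <= n) ?orbT //; lia.
rewrite /template /block hamming_cat ?hamming_refl // hamming_cat ?size_nseq ?size_enc //.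
rewrite -size_enc -size_back !hamming_nseq.
have -> : count (fun y => false != y) back = count id back by apply: eq_count => -[].
have := count_predC id enc; rewrite (@eq_count _ (predC id) (fun y => true != y)) //.
by rewrite count_encode count_back_tag size_enc /dd /bb; lia.
Qed.

Lemma choice_match_n_gt1 s d p : 0 < size s -> is_match_at c s d p -> 1 < n.
Proof.
move=> s_gt0 [fit _]; have : 0 < size E.
  by move: fit; rewrite size_choice_string lt0n; apply: contraTneq => ->; lia.
by move=> /(mem_nth (0, 0)) /E_edges; lia.
Qed.

Lemma choice_match_block s p : 1 < n -> 2 < k -> size s = LL n k ->
  hamming s (template n k) <= dd n k -> is_match_at c s (dd n k) p ->
  exists2 e, e \in E & substr c p (size s) = block n k i j e.
Proof.
move=> n_gt1 k_ge3 size_s s_t c_match.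
apply: (aligned_match_block (LL_gt0 n k_ge3) size_s c_match).
exact: choice_match_aligned c_match.
Qed.

Lemma front_tag_prefix_close s e : e \in E -> size s = LL n k ->
  hamming s (template n k) <= dd n k -> hamming s (block n k i j e) <= dd n k ->
  prefix (front_tag n k) s.
Proof.
move=> e_in size_s s_t s_blk.
have tight : hamming s (template n k) + hamming s (block n k i j e)
    <= hamming (template n k) (block n k i j e).
  by apply: leq_trans (hamming_template_block e_in); rewrite mul2n -addnn leq_add.
apply: (@prefix_nth _ false); first by rewrite size_front_tag size_s LL_split leq_addr.
move=> o; rewrite size_front_tag => lt_o.
have front_t : nth false (template n k) o = nth false (front_tag n k) o.
  by rewrite /template nth_cat size_front_tag lt_o.
rewrite -front_t; apply: (hamming_tight _ _ tight); rewrite ?size_template ?size_block //.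
  by rewrite size_s LL_split ltn_addr.
by rewrite front_t /block nth_cat size_front_tag lt_o.
Qed.

End ChoiceString.

Theorem lemma3 (n k : nat) (E : seq (nat * nat)) (s : seq bool) :
  simple_graph_edges n E -> 3 <= k ->
  is_solution n k E s ->
  prefix (front_tag n k) s /\
  (forall p, is_match_at (template n k) s (dd n k) p ->
     prefix (front_tag n k) (substr (template n k) p (size s))) /\
  (forall i j p, 1 <= i -> i < j -> j <= k ->
     is_match_at (choice_string n k E i j) s (dd n k) p ->
     prefix (front_tag n k) (substr (choice_string n k E i j) p (size s))).
Proof.
move=> [_ E_edges] k_ge3 [size_s [[p0 t_match] c_match]].
have le2k : 2 <= k := ltnW k_ge3.
have s_t : hamming s (template n k) <= dd n k.
  by rewrite -(template_match_window size_s t_match); case: t_match.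
have [p12 c12_match] := c_match 1 2 isT isT le2k.
have n_gt1 : 1 < n.
  apply: (choice_match_n_gt1 (i := 1) (j := 2) E_edges isT isT le2k _ c12_match).
  by rewrite size_s LL_gt0.
have block_window i j p : 0 < i -> i < j -> j <= k ->
    is_match_at (choice_string n k E i j) s (dd n k) p ->
    exists2 e, e \in E & substr (choice_string n k E i j) p (size s) = block n k i j e.
  by move=> i_gt0 lt_ij le_jk; apply: choice_match_block.
split; [|split].
- have [e e_in blk_eq] := block_window 1 2 p12 isT isT le2k c12_match.
  apply: (front_tag_prefix_close (i := 1) (j := 2) E_edges isT isT le2k e_in size_s s_t).
  by rewrite -blk_eq; case: c12_match.
- by move=> p /(template_match_window size_s)->; apply: prefix_prefix.
- by move=> i j p i_gt0 lt_ij le_jk /block_window[] // e _ ->; apply: prefix_prefix.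
Qed.
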